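(* Let $\alpha\geq 1$ be a real number. If a connected $(n,m)$-graph $G$ has maximum value of $Pl_\alpha$ among all connected $(n,m)$-graphs, then the maximum vertex degree in $G$ is $n-1$.
   Context: All graphs are finite, simple, undirected and connected; an $(n,m)$-graph has $n$ vertices and $m$ edges. The general Platt index is $Pl_\alpha(G)=\sum_{uv\in E(G)}(d_u+d_v-2)^\alpha$, where $d_u$ is the degree of vertex $u$. *)

From Stdlib Require Import Reals.
From mathcomp Require Import all_boot.

Set Implicit Arguments.
Unset Strict Implicit.
Unset Printing Implicit Defensive.

Definition simple_graph (n : nat) (e : rel 'I_n) : Prop :=
  (forall u v, e u v = e v u) /\ (forall u, e u u = false).

(* Connected: every two vertices are joined by a path (n >= 1 required separately). *)
Definition connected_graph (n : nat) (e : rel 'I_n) : Prop :=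
  forall u v, connect e u v.

Definition deg (n : nat) (e : rel 'I_n) (u : 'I_n) : nat := #|[set v | e u v]|.

Definition edges (n : nat) (e : rel 'I_n) : {set 'I_n * 'I_n} :=
  [set p : 'I_n * 'I_n | (p.1 < p.2)%N && e p.1 p.2].

Definition num_edges (n : nat) (e : rel 'I_n) : nat := #|edges e|.

(* Real power x^a for x >= 0, with the convention 0^a = 0 (a >= 1 here). *)
Definition rpow (x a : R) : R := if Req_EM_T x R0 then R0 else Rpower x a.

Definition platt (alpha : R) (n : nat) (e : rel 'I_n) : R :=
  \big[Rplus/R0]_(p in edges e)
     rpow (INR (deg e p.1 + deg e p.2 - 2)%N) alpha.

(* Let u be a vertex of maximum degree and suppose d(u) < n - 1.  By connectivity there
   is a path u - x - z with z not adjacent to u.  The Kelmans operation transfers to u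
   every neighbour of x that is not already a neighbour of u.  It preserves connectivity,
   the degrees of all vertices other than u and x, and the sum d(u) + d(x), hence the
   number of edges; d(u) strictly increases and d(x) does not.  Since t |-> (t - 2)^alpha
   is nondecreasing and discretely convex for alpha >= 1, no edge at u or x loses weight,
   and the edge xz, which becomes uz, strictly gains; so Pl_alpha strictly increases. *)

From HB Require Import structures.
From Stdlib Require Import Reals Lra Lia.
From mathcomp Require Import all_boot zify.

Set Implicit Arguments.
Unset Strict Implicit.
Unset Printing Implicit Defensive.

Lemma bigD2 (T : Type) (idx : T) (op : Monoid.com_law idx) (I : finType) (i j : I)
    (F : I -> T) : i != j ->
  \big[op/idx]_k F k = op (op (F i) (F j)) (\big[op/idx]_(k | (k != i) && (k != j)) F k).
Proof. by move=> ne_ij; rewrite (bigD1 i) // (bigD1 j) 1?eq_sym //= Monoid.mulmA. Qed.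

Lemma big_adj_edges (T : Type) (idx : T) (op : Monoid.com_law idx) n (e : rel 'I_n)
    (g : 'I_n -> 'I_n -> T) :
  simple_graph e -> (forall a b, g a b = g b a) ->
  \big[op/idx]_a \big[op/idx]_b (if e a b then g a b else idx) =
  op (\big[op/idx]_(p in edges e) g p.1 p.2) (\big[op/idx]_(p in edges e) g p.1 p.2).
Proof.
move=> [e_sym e_irr] g_sym.
rewrite pair_bigA -(big_mkcond (fun p : 'I_n * 'I_n => e p.1 p.2)) /=.
rewrite (bigID (fun p : 'I_n * 'I_n => (p.1 < p.2))) /=.
congr (op _ _); first by apply: eq_bigl => p; rewrite inE andbC.
rewrite (reindex_inj (h := fun p : 'I_n * 'I_n => (p.2, p.1))) /=; last first.
  by move=> [a b] [c d] /= [-> ->].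
apply: eq_big => [[a b]|[a b] _] /=; last exact: g_sym.
rewrite inE /= e_sym; case: (eqVneq a b) => [->|neq_ab]; first by rewrite e_irr andbF.
by rewrite -leqNgt leq_eqVlt -[(a : nat) == b]/(a == b) (negbTE neq_ab) andbC.
Qed.

Lemma handshake n (e : rel 'I_n) : simple_graph e ->
  num_edges e + num_edges e = \sum_i deg e i.
Proof.
move=> e_simple; rewrite /num_edges -sum1_card.
rewrite -(@big_adj_edges nat 0 addn n e (fun _ _ => 1) e_simple) //.
apply: eq_bigr => i _; rewrite /deg -sum1_card big_mkcond [RHS]big_mkcond /=.
by apply: eq_bigr => j _; rewrite inE; case: (e i j).
Qed.

Definition nbhd n (e : rel 'I_n) (v : 'I_n) : {set 'I_n} := [set w | e v w].

Lemma deg_nbhd n (e : rel 'I_n) v : deg e v = #|nbhd e v|.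
Proof. by []. Qed.

Lemma deg_gt0 n (e : rel 'I_n) a b : e a b -> 0 < deg e a.
Proof. by move=> e_ab; apply/card_gt0P; exists b; rewrite inE. Qed.

Lemma exists_nonneighbour n (e : rel 'I_n) u : simple_graph e -> deg e u != n.-1 ->
  exists2 w, w != u & ~~ e u w.
Proof.
move=> [_ e_irr] deg_u.
case: (pickP (fun w => (w != u) && ~~ e u w)) => [w /andP[]|no_w]; first by exists w.
case/eqP: deg_u; rewrite deg_nbhd; have -> : nbhd e u = [set~ u]; last by rewrite cardsC1 card_ord.
apply/setP => w; rewrite !inE; have := no_w w.
by case: (eqVneq w u) => [->|_]; [rewrite e_irr | case: (e u w)].
Qed.

Lemma connected_exists_path2 n (e : rel 'I_n) u w :
  simple_graph e -> connected_graph e -> w != u -> ~~ e u w ->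
  exists x z, [/\ e u x, e x z, ~~ e u z & z != u].
Proof.
move=> [e_sym _] e_conn ne_wu far_w.
case: (pickP (fun p : 'I_n * 'I_n => [&& e u p.1, e p.1 p.2, ~~ e u p.2 & p.2 != u]))
  => [[x z] /and4P[? ? ? ?]|no_path2]; first by exists x, z.
pose ball := u |: nbhd e u.
have ball_step a b : e a b -> a \in ball -> b \in ball.
  move=> e_ab; rewrite !inE => /orP[/eqP a_u|e_ua]; first by rewrite -a_u e_ab orbT.
  have := no_path2 (a, b); rewrite /= e_ua e_ab /=.
  by case: (eqVneq b u) => //= _; case: (e u b).
have ball_closed : closed e (mem ball).
  by move=> a b e_ab; apply/idP/idP; apply: ball_step; rewrite // e_sym.
have := closed_connect ball_closed (e_conn u w).
by rewrite !inE eqxx (negbTE ne_wu) (negbTE far_w).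
Qed.

Section Kelmans.

Variables (n : nat) (e : rel 'I_n) (u x : 'I_n).
Hypothesis e_simple : simple_graph e.
Hypothesis e_ux : e u x.

Let e_sym : forall a b, e a b = e b a := proj1 e_simple.
Let e_irr : forall a, e a a = false := proj2 e_simple.

Lemma neq_xu : x != u.
Proof. by apply: contraTneq e_ux => ->; rewrite e_irr. Qed.

Definition kelmans : rel 'I_n := fun a b =>
  if a == u then (b != u) && (e u b || e x b)
  else if b == u then e u a || e x a
  else if a == x then e x b && e u b
  else if b == x then e x a && e u a
  else e a b.

Lemma kelmans_u b : b != u -> kelmans u b = e u b || e x b.
Proof. by move=> ne_bu; rewrite /kelmans eqxx ne_bu. Qed.

Lemma kelmans_x b : b != u -> b != x -> kelmans x b = e x b && e u b.
Proof. by move=> ne_bu ne_bx; rewrite /kelmans (negbTE neq_xu) (negbTE ne_bu) eqxx. Qed.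

Lemma kelmans_other a b : a != u -> a != x -> b != u -> b != x -> kelmans a b = e a b.
Proof. by move=> ? ? ? ?; rewrite /kelmans !ifN. Qed.

Lemma kelmans_simple : simple_graph kelmans.
Proof.
split=> [a b|a]; rewrite /kelmans.
  case: (eqVneq a u) => [->|ne_au]; case: (eqVneq b u) => //=.
  by case: (eqVneq a x) => [->|ne_ax]; case: (eqVneq b x) => [->|ne_bx].
by case: (eqVneq a u) => //= _; case: (eqVneq a x) => [->|_]; rewrite e_irr.
Qed.

Lemma kelmans_xu : kelmans x u.
Proof. by rewrite (proj1 kelmans_simple) kelmans_u ?e_ux // neq_xu. Qed.

Lemma kelmans_edge a b : e a b -> kelmans a b || kelmans a u && kelmans u b.
Proof.
rewrite /kelmans eqxx; case: (eqVneq a u) => [->|ne_au] e_ab /=.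
  by case: (eqVneq b u) e_ab => [->|_ ->]; rewrite ?e_irr.
case: (eqVneq b u) e_ab => [->|ne_bu] e_ab /=; first by rewrite e_sym e_ab.
case: (eqVneq a x) e_ab => [->|ne_ax] e_ab /=; first by rewrite e_ab e_ux !orbT.
case: (eqVneq b x) e_ab => [->|ne_bx] e_ab /=; first by rewrite e_sym e_ab e_ux !orbT.
by rewrite e_ab.
Qed.

Lemma kelmans_connected : connected_graph e -> connected_graph kelmans.
Proof.
move=> e_conn a b; apply: connect_sub (e_conn a b) => c d /kelmans_edge.
by case/orP=> [/connect1 //|/andP[cu ud]]; apply: connect_trans (connect1 cu) (connect1 ud).
Qed.

Lemma nbhd_kelmans_u : nbhd kelmans u = (nbhd e u :|: nbhd e x) :\ u.
Proof. by apply/setP => v; rewrite !inE /kelmans eqxx. Qed.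

Lemma nbhd_kelmans_x : nbhd kelmans x = u |: (nbhd e u :&: nbhd e x).
Proof.
apply/setP => v; rewrite !inE /kelmans (negbTE neq_xu).
by case: (eqVneq v u) => [->|_] /=; [rewrite e_ux | rewrite eqxx andbC].
Qed.

Lemma nbhd_kelmans_other b : b != u -> b != x ->
  nbhd kelmans b = if e x b && ~~ e u b then u |: (nbhd e b :\ x) else nbhd e b.
Proof.
move=> ne_bu ne_bx; apply/setP => v; rewrite /nbhd /kelmans (negbTE ne_bu) (negbTE ne_bx).
case: ifP => moved; rewrite !inE.
all: case: (eqVneq v u) => [->|_]; last case: (eqVneq v x) => [->|_] //.
all: by move: moved; rewrite ?(e_sym b); case: (e u b); case: (e x b).
Qed.

Lemma deg_kelmans_other b : b != u -> b != x -> deg kelmans b = deg e b.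
Proof.
move=> ne_bu ne_bx; rewrite !deg_nbhd nbhd_kelmans_other //.
case: ifP => // /andP[e_xb nu_b].
by rewrite cardsU1 [in RHS](cardsD1 x) !inE !(e_sym b) e_xb (negbTE nu_b) andbF.
Qed.

Lemma deg_kelmans_ux : (deg kelmans u + deg kelmans x = deg e u + deg e x).
Proof.
rewrite !deg_nbhd nbhd_kelmans_u nbhd_kelmans_x.
have := cardsD1 u (nbhd e u :|: nbhd e x); have := cardsU1 u (nbhd e u :&: nbhd e x).
have := cardsUI (nbhd e u) (nbhd e x).
by rewrite !inE e_irr e_sym e_ux /= => <- -> ->; rewrite addnCA addnA.
Qed.

Lemma deg_kelmans_x : (deg kelmans x <= deg e x).
Proof.
rewrite !deg_nbhd nbhd_kelmans_x; apply/subset_leq_card/subsetP => v.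
by rewrite !inE => /orP[/eqP->|/andP[_ ->]]; rewrite // e_sym.
Qed.

Lemma deg_kelmans_u z : e x z -> ~~ e u z -> z != u -> (deg e u < deg kelmans u).
Proof.
move=> e_xz nu_z ne_zu; rewrite !deg_nbhd nbhd_kelmans_u.
have <- : #|z |: nbhd e u| = #|nbhd e u|.+1 by rewrite cardsU1 inE (negbTE nu_z).
apply/subset_leq_card/subsetP => v; rewrite !inE.
case/orP=> [/eqP->|e_uv]; first by rewrite ne_zu e_xz orbT.
by rewrite e_uv andbT; apply: contraTneq e_uv => ->; rewrite e_irr.
Qed.

Lemma num_edges_kelmans : num_edges kelmans = num_edges e.
Proof.
suff sum_deg : (\sum_i deg kelmans i = \sum_i deg e i).
  by have := handshake kelmans_simple; have := handshake e_simple; lia.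
have neq_ux : u != x by rewrite eq_sym neq_xu.
rewrite !(bigD2 _ _ neq_ux) /= deg_kelmans_ux.
by congr (_ + _); apply: eq_bigr => i /andP[? ?]; rewrite deg_kelmans_other.
Qed.

End Kelmans.

Open Scope R_scope.

HB.instance Definition _ := Monoid.isComLaw.Build R 0 Rplus
  (fun a b c => esym (Rplus_assoc a b c)) Rplus_comm Rplus_0_l.

Lemma rpow_gt0 x a : 0 < x -> rpow x a = Rpower x a.
Proof. by move=> x_gt0; rewrite /rpow; case: Req_EM_T => // x0; lra. Qed.

Lemma rpow0 a : rpow 0 a = 0.
Proof. by rewrite /rpow; case: Req_EM_T. Qed.

Lemma rpow_ge0 x a : 0 <= rpow x a.
Proof. by rewrite /rpow; case: Req_EM_T => ? /=; [lra | left; apply: exp_pos]. Qed.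

Lemma rpow_le x y a : 0 <= a -> 0 <= x <= y -> rpow x a <= rpow y a.
Proof.
move=> a_ge0 [[x_gt0|<-] le_xy]; last by rewrite rpow0; apply: rpow_ge0.
by rewrite !rpow_gt0; try lra; apply: Rle_Rpower_l; lra.
Qed.

Lemma rpow_lt x y a : 0 < a -> 0 <= x < y -> rpow x a < rpow y a.
Proof.
move=> a_gt0 [[x_gt0|<-] lt_xy].
  by rewrite !rpow_gt0; try lra; apply: Rlt_Rpower_l; lra.
by rewrite rpow0 rpow_gt0 //; apply: exp_pos.
Qed.

Lemma Rpower_increment x a : 0 < x ->
  exists2 c, x < c < x + 1 & Rpower (x + 1) a - Rpower x a = a * Rpower c (a - 1).
Proof.
move=> x_gt0.
have [c [incr c_in]] := MVT_cor2 (Rpower^~ a) (fun c => a * Rpower c (a - 1))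
  x (x + 1) ltac:(lra) (fun c c_in => derivable_pt_lim_power c a ltac:(lra)).
by exists c => //; rewrite incr; ring.
Qed.

Definition nat_convex (f : nat -> R) := forall t, f t.+1 - f t <= f t.+2 - f t.+1.

Lemma rpow_nat_convex a : 1 <= a -> nat_convex (fun s => rpow (INR s) a).
Proof.
move=> a_ge1 [|s].
  have one_a : Rpower 1 a = 1 by rewrite /Rpower ln_1 Rmult_0_r exp_0.
  have := Rle_Rpower (1 + 1) 1 a; rewrite Rpower_1; last lra.
  by rewrite /= rpow0 !rpow_gt0; lra.
have s_gt0 : 0 < INR s.+1 by apply: lt_0_INR; lia.
rewrite !rpow_gt0 ?[INR s.+3]S_INR ?[INR s.+2]S_INR; try lra.
have [c1 c1_in ->] := Rpower_increment a s_gt0.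
have [c2 c2_in ->] := @Rpower_increment (INR s.+1 + 1) a ltac:(lra).
have : Rpower c1 (a - 1) <= Rpower c2 (a - 1) by apply: Rle_Rpower_l; lra.
nra.
Qed.

Section NatConvex.

Variable f : nat -> R.
Hypothesis f_convex : nat_convex f.
Hypothesis f_mono : forall s t, (s <= t)%N -> f s <= f t.

Lemma nat_convex_increment_le i j : (i <= j)%N -> f i.+1 - f i <= f j.+1 - f j.
Proof.
elim: j => [|j IHj]; first by rewrite leqn0 => /eqP ->; lra.
rewrite leq_eqVlt => /orP [/eqP ->|lt_ij]; first lra.
by have := IHj lt_ij; have := f_convex j; lra.
Qed.

Lemma nat_convex_spread A B k : (k <= B)%N -> (B <= A)%N ->
  f A + f B <= f (A + k) + f (B - k).
Proof.
elim: k => [|k IHk] le_kB le_BA; first by rewrite addn0 subn0; lra.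
have B_k : (B - k = (B - k.+1).+1)%N by lia.
have := IHk (ltnW le_kB) le_BA.
have := @nat_convex_increment_le (B - k.+1) (A + k) ltac:(lia).
by rewrite -B_k addnS; lra.
Qed.

Lemma nat_convex_majorize A B A' B' : (B' <= B)%N -> (B <= A)%N -> (A <= A')%N ->
  (A + B <= A' + B')%N -> f A + f B <= f A' + f B'.
Proof.
move=> le_B'B le_BA le_AA' le_sum.
have := @nat_convex_spread A B (B - B') (leq_subr _ _) le_BA.
have := @f_mono (A + (B - B')) A' ltac:(lia).
by rewrite subKn //; lra.
Qed.

End NatConvex.

(* [t] stands for [d_u + d_v]; for [t < 2] the truncated subtraction gives weight [0]. *)
Definition edge_weight (a : R) (t : nat) : R := rpow (INR (t - 2)) a.

Lemma edge_weight_le a s t : 0 <= a -> (s <= t)%N -> edge_weight a s <= edge_weight a t.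
Proof.
move=> a_ge0 le_st; apply: rpow_le => //; split; first exact: pos_INR.
by apply/le_INR/leP; lia.
Qed.

Lemma edge_weight_lt a s t : 0 < a -> (2 <= s < t)%N -> edge_weight a s < edge_weight a t.
Proof.
move=> a_gt0 s_t; apply: rpow_lt => //; split; first exact: pos_INR.
by apply/lt_INR/ltP; lia.
Qed.

Lemma edge_weight_convex a : 1 <= a -> nat_convex (edge_weight a).
Proof.
move=> a_ge1 [|[|t]]; rewrite /edge_weight.
- by rewrite /= rpow0; lra.
- by have := rpow_ge0 (INR 1) a; rewrite /= rpow0; lra.
- have -> : (t.+4 - 2 = t.+2)%N by lia.
  have -> : (t.+3 - 2 = t.+1)%N by lia.
  have -> : (t.+2 - 2 = t)%N by lia.
  exact: rpow_nat_convex.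
Qed.

Lemma big_Rle (I : finType) (P : pred I) (f g : I -> R) :
  (forall i, P i -> f i <= g i) ->
  \big[Rplus/0]_(i | P i) f i <= \big[Rplus/0]_(i | P i) g i.
Proof. by move=> le_fg; apply: (big_ind2 Rle) => // *; lra. Qed.

Definition pair_weight a n (r : rel 'I_n) i j : R :=
  if r i j then edge_weight a (deg r i + deg r j) else 0.

Lemma pair_weight_sym a n (r : rel 'I_n) i j : simple_graph r ->
  pair_weight a r i j = pair_weight a r j i.
Proof. by case=> r_sym _; rewrite /pair_weight r_sym addnC. Qed.

Lemma platt_double a n (r : rel 'I_n) : simple_graph r ->
  \big[Rplus/0]_i \big[Rplus/0]_j pair_weight a r i j = platt a r + platt a r.
Proof.
by move=> r_simple; apply: (big_adj_edges Rplus r_simple) => i j; rewrite addnC.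
Qed.

Section KelmansPlatt.

Variables (alpha : R) (n : nat) (e : rel 'I_n) (u x z : 'I_n).
Hypothesis alpha_ge1 : 1 <= alpha.
Hypothesis e_simple : simple_graph e.
Hypotheses (e_ux : e u x) (e_xz : e x z) (nu_z : ~~ e u z) (ne_zu : z != u).
Hypothesis deg_x_le_u : (deg e x <= deg e u)%N.

Let e_sym : forall a b, e a b = e b a := proj1 e_simple.
Let e_irr : forall a, e a a = false := proj2 e_simple.
Local Notation K := (kelmans e u x).
Local Notation w := (pair_weight alpha).

Let deg_K_ux := deg_kelmans_ux e_simple e_ux.
Let deg_K_x := deg_kelmans_x e_simple e_ux.
Let deg_K_u := deg_kelmans_u e_simple e_xz nu_z ne_zu.
Let K_simple := kelmans_simple u x e_simple.
Let K_xu := kelmans_xu e_simple e_ux.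

Lemma pair_weight_kelmans_ux_le b : w e u b + w e x b <= w K u b + w K x b.
Proof.
have w_le := @edge_weight_le alpha; have a_ge0 : 0 <= alpha by lra.
rewrite /pair_weight.
case: (eqVneq b u) => [->|ne_bu].
  rewrite e_irr (proj2 K_simple) e_sym e_ux K_xu.
  by have := w_le (deg e x + deg e u)%N (deg K x + deg K u)%N a_ge0 ltac:(lia); lra.
case: (eqVneq b x) => [->|ne_bx].
  rewrite e_irr (proj2 K_simple) (proj1 K_simple) e_ux K_xu.
  by have := w_le (deg e u + deg e x)%N (deg K u + deg K x)%N a_ge0 ltac:(lia); lra.
rewrite kelmans_u // (kelmans_x e_simple e_ux) // (deg_kelmans_other e_simple ne_bu ne_bx).
case: (e u b); case: (e x b) => /=; last lra.
- (* a common neighbour: the pair (d u, d x) is spread apart with the same sum *)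
  apply: nat_convex_majorize; [exact: edge_weight_convex | | lia..].
  by move=> s t; apply: w_le.
- by have := w_le (deg e u + deg e b)%N (deg K u + deg e b)%N a_ge0 ltac:(lia); lra.
- by have := w_le (deg e x + deg e b)%N (deg K u + deg e b)%N a_ge0 ltac:(lia); lra.
Qed.

Lemma pair_weight_kelmans_ux_lt : w e u z + w e x z < w K u z + w K x z.
Proof.
have ne_zx : z != x by apply: contraTneq e_xz => ->; rewrite e_irr.
rewrite /pair_weight kelmans_u // (kelmans_x e_simple e_ux) //.
rewrite (deg_kelmans_other e_simple ne_zu ne_zx) (negbTE nu_z) e_xz /=.
have deg_z : (0 < deg e z)%N by apply: (@deg_gt0 _ _ _ x); rewrite e_sym.
have deg_x : (0 < deg e x)%N by apply: (@deg_gt0 _ _ _ u); rewrite e_sym.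
have := @edge_weight_lt alpha (deg e x + deg e z) (deg K u + deg e z) ltac:(lra) ltac:(lia).
lra.
Qed.

Let neq_ux : u != x. Proof. by rewrite eq_sym (neq_xu e_simple e_ux). Qed.

Lemma row_pair_weight_kelmans_le a : a != u -> a != x ->
  \big[Rplus/0]_b w e a b <= \big[Rplus/0]_b w K a b.
Proof.
move=> ne_au ne_ax; rewrite !(bigD2 _ _ neq_ux).
rewrite [w e a u]pair_weight_sym // [w e a x]pair_weight_sym //.
rewrite [w K a u]pair_weight_sym // [w K a x]pair_weight_sym //.
apply: Rplus_le_compat; first exact: pair_weight_kelmans_ux_le.
apply: Req_le; apply: eq_bigr => b /andP[ne_bu ne_bx].
by rewrite /pair_weight kelmans_other // !(deg_kelmans_other e_simple).
Qed.

Lemma double_sum_pair_weight_kelmans_lt :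
  \big[Rplus/0]_a \big[Rplus/0]_b w e a b < \big[Rplus/0]_a \big[Rplus/0]_b w K a b.
Proof.
rewrite [X in X < _](bigD2 _ _ neq_ux) [X in _ < X](bigD2 _ _ neq_ux) -!big_split /=.
apply: Rplus_lt_le_compat; last by apply: big_Rle => a /andP[]; apply: row_pair_weight_kelmans_le.
rewrite (bigD1 z) // [X in _ < X](bigD1 z) //=.
apply: Rplus_lt_le_compat; first exact: pair_weight_kelmans_ux_lt.
by apply: big_Rle => b _; apply: pair_weight_kelmans_ux_le.
Qed.

Lemma platt_kelmans_lt : platt alpha e < platt alpha K.
Proof. by have := double_sum_pair_weight_kelmans_lt; rewrite !platt_double //; lra. Qed.

End KelmansPlatt.

Theorem corollary4 (alpha : R) (n m : nat) (e : rel 'I_n) :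
  Rle R1 alpha ->
  (0 < n)%N ->
  simple_graph e -> connected_graph e -> num_edges e = m ->
  (forall e' : rel 'I_n,
     simple_graph e' -> connected_graph e' -> num_edges e' = m ->
     Rle (platt alpha e') (platt alpha e)) ->
  exists u : 'I_n, deg e u = n.-1.
Proof.
move=> alpha_ge1 n_gt0 e_simple e_conn e_m e_max.
have [u _ u_max] := @arg_maxnP _ (Ordinal n_gt0) xpredT (deg e) isT.
case: (eqVneq (deg e u) n.-1) => [|deg_u]; first by exists u.
have [w ne_wu far_w] := exists_nonneighbour e_simple deg_u.
have [x [z [e_ux e_xz nu_z ne_zu]]] := connected_exists_path2 e_simple e_conn ne_wu far_w.
have := e_max _ (kelmans_simple u x e_simple) (kelmans_connected e_simple e_ux e_conn)
  (etrans (num_edges_kelmans e_simple e_ux) e_m).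
have := platt_kelmans_lt alpha_ge1 e_simple e_ux e_xz nu_z ne_zu (u_max x isT).
lra.
Qed.
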